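(* Let $R$ be a commutative ring with nonzero identity, $\delta$ an expansion of ideals of $R$, and $I$ a $\delta$-$n$-ideal of $R$ such that $(\delta(I):x)\subseteq\delta((I:x))\neq R$ for all $x\in R\setminus\delta(I)$. Then $(I:x)$ is a $\delta$-$n$-ideal of $R$ for every $x\in R\setminus\delta(I)$. In particular, if $I$ is a quasi $n$-ideal of $R$, then $(I:x)$ is a quasi $n$-ideal of $R$ for all $x\in R\setminus\sqrt{I}$.
   Context: An expansion of ideals of a ring $R$ is a map $\delta$ from the set of ideals of $R$ to itself such that $I\subseteq\delta(I)$ for every ideal $I$, and $\delta(I)\subseteq\delta(J)$ whenever $I\subseteq J$. $\sqrt{0}$ denotes the nilradical of $R$ and $(I:x)=\{r\in R: rx\in I\}$. Given an expansion $\delta$, a proper ideal $I$ of $R$ is a $\delta$-$n$-ideal if whenever $a,b\in R$ with $ab\in I$ and $a\notin\sqrt{0}$, then $b\in\delta(I)$. A quasi $n$-ideal is a $\delta_1$-$n$-ideal, where $\delta_1(J)=\sqrt{J}$. *)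

(* Ideals of a commutative ring R are represented as
   predicates R -> Prop (subsets of R). *)
From mathcomp Require Import all_boot all_order all_algebra.
Set Implicit Arguments. Unset Strict Implicit. Unset Printing Implicit Defensive.
Import GRing.Theory.
Local Open Scope ring_scope.

Section Defs.
Variable R : comNzRingType.

Definition ideal (I : R -> Prop) : Prop :=
  I 0 /\ (forall a b, I a -> I b -> I (a - b)) /\ (forall r a, I a -> I (r * a)).

Definition sub_ideal (I J : R -> Prop) : Prop := forall r, I r -> J r.

Definition is_whole (I : R -> Prop) : Prop := forall r, I r.

Definition proper_ideal (I : R -> Prop) : Prop := ideal I /\ ~ is_whole I.

Definition expansion (delta : (R -> Prop) -> (R -> Prop)) : Prop :=
  (forall I, ideal I -> ideal (delta I)) /\
  (forall I, ideal I -> sub_ideal I (delta I)) /\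
  (forall I J, ideal I -> ideal J -> sub_ideal I J -> sub_ideal (delta I) (delta J)).

Definition nilrad (a : R) : Prop := exists n : nat, a ^+ n = 0.

Definition radical (J : R -> Prop) : R -> Prop := fun a => exists n : nat, J (a ^+ n).

Definition colon (I : R -> Prop) (x : R) : R -> Prop := fun r => I (r * x).

Definition delta_n_ideal (delta : (R -> Prop) -> (R -> Prop)) (I : R -> Prop) : Prop :=
  proper_ideal I /\
  (forall a b, I (a * b) -> ~ nilrad a -> delta I b).

Definition quasi_n_ideal (I : R -> Prop) : Prop := delta_n_ideal radical I.

End Defs.

(* For x outside delta(I), a product a b in (I : x) with a not nilpotent means
   a (b x) lies in I, so b x lies in delta(I), i.e. b lies in (delta(I) : x), and the
   hypothesis (delta(I) : x) ⊆ delta((I : x)) finishes.  Properness of (I : x) already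
   follows from x not lying in I.
   For quasi n-ideals the inclusion holds automatically: if r x lies in sqrt I then
   r^n x^n lies in I, so either r is nilpotent or x^n, hence x, lies in sqrt I. *)
From Pilot Require Import Defs.
From mathcomp Require Import all_boot all_order all_algebra.
From Stdlib Require Import Classical.
Local Open Scope ring_scope.
Import GRing.Theory.

Set Implicit Arguments.
Unset Strict Implicit.

Section Colon.
Variable R : comNzRingType.
Implicit Types (I : R -> Prop) (delta : (R -> Prop) -> (R -> Prop)) (a b r x : R).

Lemma colon_ideal I x : ideal I -> ideal (colon I x).
Proof.
move=> [I0 [IB IM]]; split; [|split].
- by rewrite /colon mul0r.
- by move=> a b Ia Ib; rewrite /colon mulrBl; apply: IB.
- by move=> r a Ia; rewrite /colon -mulrA; apply: IM.
Qed.

(* Qualified: ssralg's [proper_ideal] shadows the one from Defs. *)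
Lemma colon_proper_ideal I x : ideal I -> ~ I x -> Defs.proper_ideal (colon I x).
Proof.
move=> idI Ix; split; first exact: colon_ideal.
by move=> whole; apply: Ix; rewrite -[x]mul1r; apply: whole.
Qed.

Lemma delta_n_ideal_colon delta I x :
  sub_ideal I (delta I) -> delta_n_ideal delta I -> ~ delta I x ->
  sub_ideal (colon (delta I) x) (delta (colon I x)) ->
  delta_n_ideal delta (colon I x).
Proof.
move=> I_delta [[idI _] nI] deltaIx colon_delta; split.
  by apply: colon_proper_ideal => // Ix; apply/deltaIx/I_delta.
move=> a b Iabx nil_a; apply/colon_delta/(nI a) => //.
by rewrite /colon -mulrA in Iabx.
Qed.

Lemma nilrad_exprn a n : nilrad (a ^+ n) -> nilrad a.
Proof. by move=> [k ank0]; exists (n * k)%N; rewrite exprM. Qed.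

Lemma radical_exprn I a n : radical I (a ^+ n) -> radical I a.
Proof. by move=> [k Iank]; exists (n * k)%N; rewrite exprM. Qed.

Lemma sub_radical I : sub_ideal I (radical I).
Proof. by move=> a Ia; exists 1%N; rewrite expr1. Qed.

Lemma nilrad_sub_radical I : ideal I -> sub_ideal (@nilrad R) (radical I).
Proof. by move=> [I0 _] a [n an0]; exists n; rewrite an0. Qed.

Lemma quasi_n_ideal_colon_radical I x :
  quasi_n_ideal I -> ~ radical I x ->
  sub_ideal (colon (radical I) x) (radical (colon I x)).
Proof.
move=> [[idI _] qI] sqrtIx r [n Irxn].
case: (classic (nilrad r)) => [nil_r | nnil_r].
  exact: nilrad_sub_radical (colon_ideal x idI) _ nil_r.
have nnil_rn : ~ nilrad (r ^+ n) by move/nilrad_exprn.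
rewrite exprMn in Irxn.
by case: sqrtIx; apply: (radical_exprn (n := n)); exact: qI Irxn nnil_rn.
Qed.

End Colon.

Theorem lemma2p11 :
  (forall (R : comNzRingType) (delta : (R -> Prop) -> (R -> Prop)) (I : R -> Prop),
     expansion delta ->
     delta_n_ideal delta I ->
     (forall x : R, ~ delta I x ->
        sub_ideal (colon (delta I) x) (delta (colon I x)) /\
        ~ is_whole (delta (colon I x))) ->
     forall x : R, ~ delta I x -> delta_n_ideal delta (colon I x))
  /\
  (forall (R : comNzRingType) (I : R -> Prop),
     quasi_n_ideal I ->
     forall x : R, ~ radical I x -> quasi_n_ideal (colon I x)).
Proof.
split.
- move=> R delta I [_ [extensive _]] nI colon_hyp x deltaIx.
  have I_delta := extensive I nI.1.1.
  exact: delta_n_ideal_colon I_delta nI deltaIx (colon_hyp x deltaIx).1.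
- move=> R I qI x sqrtIx.
  apply: delta_n_ideal_colon => //; first exact: sub_radical.
  exact: quasi_n_ideal_colon_radical.
Qed.
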